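(* Let $h:\mathbb{R}\to[0,+\infty)$ be a super-multiplicative function (i.e. $h(xy)\ge h(x)h(y)$ for all $x,y\in\mathbb{R}$) such that $h(t)\ge t$ for all $t$ and $h(1)=1$. Let $f:(a,b)\to\mathbb{R}$ be $h$-mid-convex, i.e. $$f\Big(\frac{x+y}{2}\Big)\le h\Big(\frac12\Big)\big(f(x)+f(y)\big)\quad\text{for all } x,y\in(a,b).$$ Suppose there is a set $M\subseteq(a,b)$ of positive Lebesgue measure such that $f$ is bounded above on $M$. Then $f$ is continuous. *)

From mathcomp Require Import all_boot all_algebra all_classical all_reals all_analysis.
Import Num.Theory.
Local Open Scope ring_scope.
Local Open Scope classical_set_scope.

(* The Lebesgue sigma-algebra on R: the Caratheodory-measurable sets for the
   Lebesgue outer measure, i.e. the domain of the library's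
   [completed_lebesgue_measure]. *)
Definition lebesgue_carrier (R : realType) :=
  caratheodory_type ((wlength (R:=R) idfun)^*%mu).

Definition lebesgue_measurable {R : realType} (A : set R) : Prop :=
  @measurable _ (lebesgue_carrier R) (A : set (lebesgue_carrier R)).

Definition lebesgue_meas {R : realType} (A : set R) : \bar R :=
  @completed_lebesgue_measure R (A : set (lebesgue_carrier R)).

(* Since h 2 * h (1/2) <= h 1 = 1, h 2 >= 2 and h (1/2) >= 1/2, we get
   h (1/2) = 1/2, so f is midpoint convex.  A Steinhaus-type argument shows
   that the midpoints of a set of positive measure fill a ball, on which f is
   therefore bounded above.  Moving such a ball halfway towards a point,
   repeatedly, yields a ball around any point x of (a, b) on which f <= K, and
   then midpoint convexity gives |f (x + u) - f x| <= (K - f x) / 2^n whenever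
   |u| 2^n is smaller than the radius: f is continuous at x. *)

From mathcomp Require Import all_boot all_algebra all_classical all_reals all_analysis.
From mathcomp Require Import all_order ring lra.
Import Num.Theory numFieldNormedType.Exports.
Import Order.TTheory GRing.Theory.
Local Open Scope ring_scope.
Local Open Scope classical_set_scope.

Section LebesgueOuterMeasure.
Context {R : realType}.
Local Open Scope ereal_scope.

Local Notation lam := ((wlength (R:=R) idfun)^*%mu).

Lemma lam_ge0 (A : set R) : 0 <= lam A.
Proof. exact: (mu_ext_ge0 (wlength_ge0 (R:=R) idfun)). Qed.

Lemma lam0 : lam set0 = 0.
Proof.
exact: (@mu_ext0 _ (ocitv_type R) R _ (wlength0 idfun) (wlength_ge0 idfun)).
Qed.

Lemma le_lam {A B : set R} : A `<=` B -> lam A <= lam B.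
Proof. exact: (le_mu_ext (wlength (R:=R) idfun)). Qed.

Lemma lam_sigma_subadditive (F : (set R)^nat) :
  lam (\bigcup_k F k) <= \sum_(0 <= k <oo) lam (F k).
Proof. exact: (mu_ext_sigma_subadditive (wlength_ge0 (R:=R) idfun)). Qed.

Lemma lam_itv (i : interval R) :
  lam [set` i] = if i.1 < i.2 then (i.2 : \bar R) - i.1 else 0.
Proof. exact (lebesgue_measure_itv i). Qed.

Lemma lam_reflect_le (t : R) (A : set R) : lam [set (t - x)%R | x in A] <= lam A.
Proof.
apply: le_ereal_inf_tmp => _ [F [mF AF] <-].
apply: (@le_trans _ _ (lam (\bigcup_k [set (t - x)%R | x in F k]))).
  apply: le_lam => _ [x Ax <-]; have [k _ Fkx] := AF x Ax.
  by exists k => //; exists x.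
apply: le_trans (lam_sigma_subadditive _) _.
apply: lee_nneseries => [k _ _|k _]; first exact: lam_ge0.
have [[x1 x2] _ <-] := mF k.
have -> : [set (t - x)%R | x in `]x1, x2]] = `[(t - x2)%R, (t - x1)%R[.
  apply/seteqP; split => y /=.
    by move=> [z]; rewrite !in_itv /= => /andP[? ?] <-; apply/andP; split; lra.
  rewrite in_itv /= => /andP[? ?]; exists (t - y)%R; last by lra.
  by rewrite in_itv /=; apply/andP; split; lra.
rewrite lam_itv wlength_itv /= !lte_fin.
have -> : (t - x2 < t - x1)%R = (x1 < x2)%R by apply/idP/idP; lra.
by case: ifP => // _; rewrite -!EFinD lee_fin; lra.
Qed.

Lemma lam_reflect (t : R) (A : set R) : lam [set (t - x)%R | x in A] = lam A.
Proof.
apply/le_anti; rewrite lam_reflect_le /=.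
rewrite -{1}[A](_ : [set (t - y)%R | y in [set (t - x)%R | x in A]] = A).
  exact: lam_reflect_le.
apply/seteqP; split => [_ [_ [x Ax <-] <-]|x Ax].
  by rewrite opprB addrC subrK.
by exists (t - x)%R; [exists x | rewrite opprB addrC subrK].
Qed.

Lemma lam_bounded_lt_pinfty {A : set R} {a b : R} :
  A `<=` `]a, b[ -> lam A < +oo.
Proof.
move=> A_sub; apply: le_lt_trans (le_lam A_sub) _.
by rewrite lam_itv /=; case: ifP => _; rewrite ?ltry.
Qed.

Lemma exists_itv_lam_gt_half (A : set R) : 0 < lam A -> lam A < +oo ->
  exists p q : R, (p < q)%R /\
    (q - p)%:E < lam (A `&` `]p, q]) + lam (A `&` `]p, q]).
Proof.
move=> A_gt0 A_fin.
(* Otherwise any interval cover of A has total length at least 2 lam A,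
   while lam A is the infimum of these total lengths. *)
have A_fin_num : lam A \is a fin_num by rewrite ge0_fin_numE ?lam_ge0.
have fineA_gt0 : (0 < fine (lam A))%R by rewrite -lte_fin fineK.
have [_ [F [mF AF] <-]] := lb_ereal_inf_adherent fineA_gt0 A_fin_num.
rewrite fineK // => cover_lt.
apply: contrapT => no_itv.
have double_le k : lam (A `&` F k) + lam (A `&` F k) <= wlength idfun (F k).
  have [[x1 x2] _ <-] := mF k; rewrite wlength_itv /= lte_fin.
  have [x12|x21] := ltP x1 x2.
    by rewrite leNgt; apply/negP => lt; apply: no_itv; exists x1, x2.
  by rewrite set_itv_ge ?bnd_simp -?leNgt // setI0 lam0 adde0.
have A_le : lam A <= \sum_(0 <= k <oo) lam (A `&` F k).
  apply: le_trans (lam_sigma_subadditive _); apply: le_lam => x Ax.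
  by have [k _ Fkx] := AF x Ax; exists k.
have : lam A + lam A <= \sum_(0 <= k <oo) wlength idfun (F k).
  apply: le_trans (leeD A_le A_le) _.
  rewrite -nneseriesD; last 2 first.
  - by move=> *; exact: lam_ge0.
  - by move=> *; exact: lam_ge0.
  apply: lee_nneseries => [k _ _|k _]; last exact: double_le.
  by rewrite adde_ge0 ?lam_ge0.
by move=> le2; have := lt_le_trans cover_lt le2; rewrite ltxx.
Qed.

Lemma lam_not_midpoint (B : set R) (c : R) : lebesgue_measurable B ->
  ~ (exists x y, [/\ B x, B y & c = (x + y) / 2]%R) ->
  lam (B `|` [set (2 * c - y)%R | y in B]) = lam B + lam B.
Proof.
move=> mB no_mid; set B' := [set _ | _ in B].
have UB : (B `|` B') `&` B = B by rewrite setIUl setIid; apply/setUidl => z [].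
have UB' : (B `|` B') `&` ~` B = B'.
  rewrite setIUl setICr set0U; apply/setIidl => _ [y By <-] Bz.
  by apply: no_mid; exists (2 * c - y)%R, y; split => //; lra.
have := mB (B `|` B'); rewrite UB UB' => ->.
by congr (_ + _); exact: lam_reflect.
Qed.

Lemma midpoints_contain_ball (A : set R) :
  lebesgue_measurable A -> 0 < lam A -> lam A < +oo ->
  exists c0 r : R, (0 < r)%R /\ forall c : R, (`|c - c0| < r)%R ->
    exists x y : R, [/\ A x, A y & c = (x + y) / 2]%R.
Proof.
move=> mA A_gt0 A_fin.
have [p [q [pq dense]]] := exists_itv_lam_gt_half _ A_gt0 A_fin.
set B := A `&` `]p, q].
have mB : lebesgue_measurable B.
  apply: measurableI mA _; apply: sub_caratheodory; apply: sub_sigma_algebra.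
  by exists (p, q).
have B_fin : lam B \is a fin_num.
  rewrite ge0_fin_numE ?lam_ge0 //.
  apply: (@le_lt_trans _ _ (lam `]p, q]%classic)); first by apply: le_lam => z [].
  by rewrite lam_itv /= lte_fin pq ltry.
set beta := fine (lam B); have lamB : lam B = beta%:E by rewrite fineK.
rewrite lamB -EFinD lte_fin in dense.
exists ((p + q) / 2)%R, ((beta + beta - (q - p)) / 4)%R; split; first lra.
(* If c is not a midpoint of B, then B and 2 c - B are disjoint subsets of an
   interval barely longer than ]p, q], too short to hold twice lam B. *)
move=> c c_near; apply: contrapT => no_mid.
have /ler_normlP [? ?] := lexx `|c - (p + q) / 2|%R.
have sub : B `|` [set (2 * c - y)%R | y in B] `<=`
    `[(p - 2 * `|c - (p + q) / 2|)%R, (q + 2 * `|c - (p + q) / 2|)%R].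
  move=> z [[_]|[y [_]]]; rewrite /= !in_itv /= => /andP[? ?].
    by apply/andP; split; lra.
  by move=> <-; apply/andP; split; lra.
have no_midB : ~ (exists x y, [/\ B x, B y & c = (x + y) / 2]%R).
  by move=> [x [y [[Ax _] [Ay _] c_mid]]]; apply: no_mid; exists x, y.
have := le_lam sub; rewrite lam_not_midpoint // lam_itv /= lte_fin.
rewrite ifT; last lra.
by rewrite lamB -!EFinD lee_fin; lra.
Qed.
End LebesgueOuterMeasure.

Lemma exists_pow2_gt {R : archiRealFieldType} (e y : R) :
  0 < e -> exists n : nat, y < e * 2 ^+ n.
Proof.
move=> e_gt0; have [y_le0|y_gt0] := leP y 0.
  by exists 0%N; rewrite expr0 mulr1; lra.
have := archi_boundP (ltW (divr_gt0 y_gt0 e_gt0)).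
set n := Num.Def.archi_bound _ => y_lt; exists n.
have : (n%:R : R) <= 2 ^+ n by rewrite -natrX ler_nat ltnW // ltn_expl.
by rewrite -ltr_pdivrMl //; lra.
Qed.

Section MidpointConvex.
Context {R : realType} {a b : R} {f : R -> R}.
Hypothesis f_midconvex : forall {x y}, a < x < b -> a < y < b ->
  f ((x + y) / 2) <= (f x + f y) / 2.

Definition bounded_above_on_ball (c r K : R) :=
  0 < r /\ forall t, `|t - c| < r -> a < t < b /\ f t <= K.

Lemma bounded_above_on_ball_mid {c r K z} : bounded_above_on_ball c r K ->
  a < z < b -> bounded_above_on_ball ((z + c) / 2) (r / 2) ((f z + K) / 2).
Proof.
move=> [r_gt0 bnd] z_in; split => [|t]; first lra.
rewrite ltr_norml => /andP[t_lo t_hi].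
have /bnd [t'_in ft'] : `|(2 * t - z) - c| < r.
  by rewrite ltr_norml; apply/andP; split; lra.
have := f_midconvex z_in t'_in.
rewrite (_ : (z + (2 * t - z)) / 2 = t); last by field.
move: z_in t'_in => /andP[? ?] /andP[? ?] ft.
by split; [apply/andP; split|]; lra.
Qed.

Lemma bounded_above_on_ball_towards {c r K x} n : bounded_above_on_ball c r K ->
  a < x < b ->
  exists K', bounded_above_on_ball (x + (c - x) / 2 ^+ n) (r / 2 ^+ n) K'.
Proof.
move=> bnd x_in; elim: n => [|n [K' IH]].
  by exists K; rewrite expr0 !divr1 addrC subrK.
exists ((f x + K') / 2).
have pow_gt0 : (0 < 2 ^+ n :> R) by rewrite exprn_gt0.
have -> : x + (c - x) / 2 ^+ n.+1 = (x + (x + (c - x) / 2 ^+ n)) / 2.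
  by rewrite exprS; field; rewrite gt_eqF.
have -> : r / 2 ^+ n.+1 = r / 2 ^+ n / 2 by rewrite exprS; field; rewrite gt_eqF.
exact: bounded_above_on_ball_mid.
Qed.

Lemma bounded_above_on_ball_at {c r K x} : bounded_above_on_ball c r K ->
  a < x < b -> exists r' K', bounded_above_on_ball x r' K'.
Proof.
move=> bnd x_in; have /andP[a_x x_b] := x_in.
have [n c_near] : exists n : nat, `|c - x| < Num.min (x - a) (b - x) * 2 ^+ n.
  by apply: exists_pow2_gt; rewrite lt_min; apply/andP; split; lra.
have [K' bnd'] := bounded_above_on_ball_towards n bnd x_in.
set d := (c - x) / 2 ^+ n in bnd'.
have : `|d| < Num.min (x - a) (b - x).
  rewrite /d normrM normfV [`|2 ^+ n|]gtr0_norm ?exprn_gt0 //.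
  by rewrite ltr_pdivrMr ?exprn_gt0.
rewrite lt_min !ltr_norml => /andP[/andP[? ?] /andP[? ?]].
have x'_in : a < x - d < b by apply/andP; split; lra.
have := bounded_above_on_ball_mid bnd' x'_in.
rewrite (_ : (x - d + (x + d)) / 2 = x); last by field.
by move=> bnd_x; do 2 eexists; exact: bnd_x.
Qed.

Lemma bounded_above_on_midpoints {A : set R} {c r K : R} :
  A `<=` `]a, b[ -> (forall t, A t -> f t <= K) -> 0 < r ->
  (forall t, `|t - c| < r -> exists x y, [/\ A x, A y & t = (x + y) / 2]) ->
  bounded_above_on_ball c r K.
Proof.
move=> A_sub f_le r_gt0 mid; split => // _ /mid [x [y [Ax Ay ->]]].
have x_in : a < x < b by exact: A_sub.
have y_in : a < y < b by exact: A_sub.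
have := f_midconvex x_in y_in; have := f_le _ Ax; have := f_le _ Ay.
by move: x_in y_in => /andP[? ?] /andP[? ?]; split; [apply/andP; split|]; lra.
Qed.

Lemma midconvex_halving {x h} n : a < x < b -> a < x + h < b ->
  a < x + h / 2 ^+ n < b /\
  f (x + h / 2 ^+ n) - f x <= (f (x + h) - f x) / 2 ^+ n.
Proof.
move=> x_in xh_in; elim: n => [|n [IH_in IH_le]].
  by rewrite expr0 !divr1.
have pow_gt0 : (0 < 2 ^+ n :> R) by rewrite exprn_gt0.
have -> : x + h / 2 ^+ n.+1 = (x + (x + h / 2 ^+ n)) / 2.
  by rewrite exprS; field; rewrite gt_eqF.
have -> : (f (x + h) - f x) / 2 ^+ n.+1 = (f (x + h) - f x) / 2 ^+ n / 2.
  by rewrite exprS; field; rewrite gt_eqF.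
have := f_midconvex x_in IH_in.
by move: x_in IH_in => /andP[? ?] /andP[? ?]; split; [apply/andP; split|]; lra.
Qed.

Lemma midconvex_dist_le {x r K} u n : bounded_above_on_ball x r K ->
  `|u| * 2 ^+ n < r -> `|f (x + u) - f x| <= (K - f x) / 2 ^+ n.
Proof.
move=> [r_gt0 bnd] u_small.
have pow_gt0 : (0 < 2 ^+ n :> R) by rewrite exprn_gt0.
have [x_in _] : a < x < b /\ f x <= K by apply: bnd; rewrite subrr normr0.
have side v : `|v| = `|u| ->
    f (x + v) - f x <= (K - f x) / 2 ^+ n /\ a < x + v < b.
  move=> v_u; have [] : a < x + v * 2 ^+ n < b /\ f (x + v * 2 ^+ n) <= K.
    by apply: bnd; rewrite addrC addKr normrM v_u gtr0_norm.
  move=> /(midconvex_halving n x_in); rewrite mulfK ?gt_eqF // => -[v_in v_le] fK.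
  by split => //; apply: le_trans v_le _; rewrite ler_pM2r ?invr_gt0 //; lra.
have [up u_in] := side u erefl.
have [down mu_in] := side (- u) (normrN u).
have := f_midconvex u_in mu_in.
rewrite (_ : (x + u + (x + - u)) / 2 = x); last by field.
by rewrite ler_norml; lra.
Qed.

Lemma midconvex_continuous_at {x r K} : bounded_above_on_ball x r K ->
  {for x, continuous f}.
Proof.
move=> bnd; have [r_gt0 _] := bnd.
apply/cvgrPdist_lt => e e_gt0.
have [n Kfx_lt] := exists_pow2_gt _ (K - f x) e_gt0.
have pow_gt0 : (0 < 2 ^+ n :> R) by rewrite exprn_gt0.
apply/nbhs_ballP; exists (r / 2 ^+ n) => [|t]; first by rewrite /= divr_gt0.
rewrite /ball /= => t_near.
have := midconvex_dist_le (t - x) n bnd; rewrite subrKC => dist_le.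
rewrite distrC; apply: le_lt_trans (dist_le _) _; last by rewrite ltr_pdivrMr.
by rewrite -ltr_pdivlMr // distrC.
Qed.
End MidpointConvex.

Lemma supermultiplicative_half {R : realFieldType} {h : R -> R} :
  (forall x y, h x * h y <= h (x * y)) -> (forall t, t <= h t) -> h 1 = 1 ->
  h 2^-1 = 2^-1.
Proof.
move=> h_mul h_ge h1; have := h_mul 2 2^-1.
rewrite mulfV ?h1 ?pnatr_eq0 // => h2_le.
have h2_ge := h_ge 2; have hhalf_ge := h_ge 2^-1.
apply/eqP; rewrite eq_le h_ge andbT.
have : 0 <= (h 2 - 2) * (h 2^-1 - 2^-1) by rewrite mulr_ge0 // subr_ge0.
nra.
Qed.

Theorem theorem3p4 (R : realType) (h : R -> R) (a b : R) (f : R -> R) :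
  (forall x, 0 <= h x) ->
  (forall x y, h x * h y <= h (x * y)) ->
  (forall t, t <= h t) ->
  h 1 = 1 ->
  (forall x y, a < x < b -> a < y < b ->
     f ((x + y) / 2) <= h (2^-1) * (f x + f y)) ->
  (exists M : set R,
     [/\ M `<=` `]a, b[, lebesgue_measurable M, (0 < lebesgue_meas M)%E
       & exists K : R, forall x, M x -> f x <= K]) ->
  forall x : R, a < x < b -> {for x, continuous f}.
Proof.
move=> _ h_mul h_ge h1 f_hmid [M [M_sub mM M_gt0 [K f_le]]] x x_in.
have f_midconvex y z : a < y < b -> a < z < b ->
    f ((y + z) / 2) <= (f y + f z) / 2.
  move=> y_in z_in; have := f_hmid _ _ y_in z_in.
  by rewrite (supermultiplicative_half h_mul h_ge h1); lra.
have [c [r [r_gt0 mid]]] :=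
  midpoints_contain_ball M mM M_gt0 (lam_bounded_lt_pinfty M_sub).
have bnd := bounded_above_on_midpoints f_midconvex M_sub f_le r_gt0 mid.
have [r' [K' bnd']] := bounded_above_on_ball_at f_midconvex bnd x_in.
exact: (midconvex_continuous_at f_midconvex bnd').
Qed.
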